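(* The map $\dagger:\Psi\mathfrak D\to\Psi\mathfrak D$, $\bigl(\sum_{m\le M}\sum_{k\le K}C_{km}x^k(d/dx)^m\bigr)^\dagger=\sum_{m\le M}\sum_{k\le K}C_{km}(-d/dx)^m x^k$, is a well-defined involutive antiautomorphism of $\Psi\mathfrak D$.
   Context: $\Psi\mathfrak D$ is the algebra of all formal series $\sum_{m=-\infty}^{M}\sum_{k=-\infty}^{K}C_{km}x^k(d/dx)^m$ with $C_{km}\in\mathbb C$ and integers $M,K$ depending on the series, with multiplication determined by $(d/dx)^m x^k=\sum_{j\ge0}\frac{(m)_j(k)_j}{j!}x^{k-j}(d/dx)^{m-j}$ for $m,k\in\mathbb Z$, $(a)_j=a(a-1)\cdots(a-j+1)$; the series $\sum C_{km}(-d/dx)^mx^k$ is interpreted in $\Psi\mathfrak D$ via this rule. *)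

From HB Require Import structures.
From mathcomp Require Import all_boot all_order all_algebra.
From mathcomp Require Import boolp classical_sets cardinality fsbigop reals.
From mathcomp Require Export complex.
Set Implicit Arguments. Unset Strict Implicit. Unset Printing Implicit Defensive.
Import Order.TTheory GRing.Theory Num.Theory.
Local Open Scope classical_set_scope.
Local Open Scope ring_scope.

Section PsiD.
Variable F : fieldType.

(* A formal series  sum_{m<=M} sum_{k<=K} C k m x^k (d/dx)^m  is represented by
   its coefficient function C : int -> int -> F  (C k m = coefficient of
   x^k (d/dx)^m). *)
Definition series := int -> int -> F.

Definition isPsiD (C : series) : Prop :=
  exists K M : int, forall k m, C k m != 0 -> (k <= K) && (m <= M).

Definition ffact (a : int) (j : nat) : F := \prod_(i < j) (a%:~R - i%:R).

(* coefficient (m)_j (k)_j / j! of the rule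
   (d/dx)^m x^k = sum_j (m)_j (k)_j / j! x^(k-j) (d/dx)^(m-j) *)
Definition rule_coef (m k : int) (j : nat) : F :=
  ffact m j * ffact k j / (j`!)%:R.

Definition psi_add (C D : series) : series := fun k m => C k m + D k m.
Definition psi_scale (a : F) (C : series) : series := fun k m => a * C k m.
Definition psi_one : series := fun k m => if (k == 0) && (m == 0) then 1 else 0.

(* product: (C_{ab} x^a d^b)(D_{cd} x^c d^d)
     = sum_j C_{ab} D_{cd} (b)_j (c)_j / j!  x^(a+c-j) d^(b+d-j);
   the coefficient of x^k d^m is the (finite, for PsiD elements) sum over
   j >= 0 and a, b, with c = k + j - a, d = m + j - b. *)
Definition psi_mul_term (C D : series) (k m : int) (t : nat * (int * int)) : F :=
  let j := t.1 in let a := t.2.1 in let b := t.2.2 in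
  C a b * D (k + j%:Z - a) (m + j%:Z - b) * rule_coef b (k + j%:Z - a) j.
Definition psi_mul (C D : series) : series :=
  fun k m => \sum_(t \in [set: nat * (int * int)]) psi_mul_term C D k m t.

(* dagger: sum C_{k'm'} (-d/dx)^{m'} x^{k'}, each term expanded by the rule
   (-d/dx)^{m'} x^{k'} = (-1)^{m'} sum_j (m')_j (k')_j/j! x^(k'-j) d^(m'-j).
   The coefficient of x^k d^m collects the terms with k' = k + j, m' = m + j. *)
Definition dag_term (C : series) (k m : int) (j : nat) : F :=
  (-1) ^ (m + j%:Z) * C (k + j%:Z) (m + j%:Z) * rule_coef (m + j%:Z) (k + j%:Z) j.
Definition dag (C : series) : series :=
  fun k m => \sum_(j \in [set: nat]) dag_term C k m j.

End PsiD.

From HB Require Import structures.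
From mathcomp Require Import all_boot all_order all_algebra.
From mathcomp Require Import boolp classical_sets cardinality fsbigop reals.
From mathcomp Require Import complex.
From mathcomp Require Import zify ring.
Set Implicit Arguments. Unset Strict Implicit. Unset Printing Implicit Defensive.
Import Order.TTheory GRing.Theory Num.Theory.
Local Open Scope classical_set_scope.
Local Open Scope ring_scope.

(* Every coefficient involved is a finite sum because supports are bounded above and each
   rewriting step lowers both degrees. Involutivity of the dagger amounts to
   sum_j (-1)^j (u)_j (v)_j/j! (u-j)_(n-j) (v-j)_(n-j)/(n-j)! = [n = 0],
   a form of the signed Chu-Vandermonde convolution
   sum_j (-1)^j C(n,j) (z)_j (x+z-j)_(n-j) = (x)_n at x = 0.
   For anti-multiplicativity, the (k, m) coefficients of (C D)^dagger and
   D^dagger C^dagger are bilinear in C and D and only involve coefficients in a finite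
   box, so it suffices to compare their kernels, i.e. to treat monomials:
   (x^a d^b x^c d^e)^dagger = (x^c d^e)^dagger (x^a d^b)^dagger. With n = a + c - k,
   both sides reduce to the same single sum over t <= n by one application of
   Chu-Vandermonde on each side and one of its signed form on the left. *)

Section FiniteSums.
Variable R : pzSemiRingType.

Lemma sum_seq_delta (T : eqType) (s : seq T) (e : T) (f : T -> R) : uniq s ->
  \sum_(x <- s) (x == e)%:R * f x = (e \in s)%:R * f e.
Proof.
elim: s => [|y s IH] /=; first by rewrite big_nil mul0r.
case/andP=> ys us; rewrite big_cons IH // in_cons.
have [<-|ne] := eqVneq y e; last by rewrite mul0r add0r.
by rewrite (negbTE ys) mul1r mul0r addr0.
Qed.

Lemma sum_seq_delta2 (T : eqType) (s : seq T) u v (G : T -> T -> R) : uniq s ->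
  \sum_(a <- s) \sum_(b <- s) (u == a)%:R * (v == b)%:R * G a b =
  (u \in s)%:R * (v \in s)%:R * G u v.
Proof.
move=> us; under eq_bigr => a _ do under eq_bigr => b _ do
  rewrite -mulrA !(eq_sym _ a, eq_sym _ b).
under eq_bigr => a _ do rewrite -mulr_sumr sum_seq_delta //.
by rewrite sum_seq_delta // mulrA.
Qed.

Lemma exchange_big_pair (I J K L : Type) (r : seq I) (s : seq J) (t : seq K) (u : seq L)
    (G : I -> J -> K -> L -> R) :
  \sum_(a <- r) \sum_(b <- s) \sum_(p <- t) \sum_(q <- u) G a b p q =
  \sum_(p <- t) \sum_(q <- u) \sum_(a <- r) \sum_(b <- s) G a b p q.
Proof.
under eq_bigr => a _ do rewrite exchange_big.
rewrite exchange_big; apply: eq_bigr => p _.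
under eq_bigr => a _ do rewrite exchange_big.
by rewrite exchange_big.
Qed.

Lemma sum_nat_delta_add (N n u : nat) (G : nat -> R) : (n < N)%N ->
  \sum_(0 <= q < N) (n == u + q)%N%:R * G q = (u <= n)%N%:R * G (n - u)%N.
Proof.
move=> nN; transitivity (\sum_(0 <= q < N) (q == n - u)%N%:R * ((u <= n)%N%:R * G q)).
  apply: eq_bigr => q _; have [un|un] := boolP (u <= n)%N.
    by rewrite mul1r (_ : (n == u + q)%N = (q == n - u)%N) //; apply/eqP/eqP; lia.
  by rewrite mul0r mulr0 (_ : (n == u + q)%N = false) ?mul0r //; apply/eqP; lia.
rewrite sum_seq_delta ?iota_uniq // mem_index_iota.
have [un|un] := boolP (u <= n)%N; last by rewrite !mul0r mulr0.
by rewrite (_ : (0 <= n - u < N)%N) ?mul1r //; lia.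
Qed.

Lemma sum_nat_antidiagonal N n (H : nat -> nat -> R) : (n < N)%N ->
  \sum_(0 <= i < N) \sum_(0 <= j < N) (n == i + j)%N%:R * H i j =
  \sum_(0 <= j < n.+1) H (n - j)%N j.
Proof.
move=> nN; rewrite exchange_big_nat.
under eq_bigr => j _ do under eq_bigr => i _ do rewrite addnC.
under eq_bigr => j _ do rewrite (sum_nat_delta_add j (H ^~ j) nN).
rewrite (@big_cat_nat _ _ _ n.+1) //= [X in _ + X]big1_seq ?addr0.
  by apply: eq_big_nat => j /andP[_ jn]; rewrite -ltnS jn mul1r.
by move=> j /=; rewrite mem_index_iota => /andP[nj _]; rewrite leqNgt nj mul0r.
Qed.

Lemma sum_nat_square_antidiagonals N (g : nat -> nat -> R) :
  (forall i j, (N <= i + j)%N -> g i j = 0) ->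
  \sum_(0 <= i < N) \sum_(0 <= j < N) g i j =
  \sum_(0 <= n < N) \sum_(0 <= j < n.+1) g (n - j)%N j.
Proof.
move=> vanish.
under [RHS]eq_big_nat => n /andP[_ nN] do rewrite -(sum_nat_antidiagonal _ nN).
rewrite [RHS]exchange_big; apply: eq_bigr => i _.
rewrite [RHS]exchange_big; apply: eq_bigr => j _.
rewrite -mulr_suml; under eq_bigr do rewrite -[_%:R]mulr1.
rewrite sum_seq_delta ?iota_uniq // mem_index_iota mulr1.
by have [ijN|/vanish ->] := ltnP (i + j) N; rewrite ?leq0n ?mul1r ?mulr0.
Qed.

Lemma sum_nat_simplex N n (h : nat -> nat -> R) : (n < N)%N ->
  \sum_(0 <= j < N) \sum_(0 <= p < N) (j + p <= n)%N%:R * h j p =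
  \sum_(0 <= s < n.+1) \sum_(0 <= p < s.+1) h (s - p)%N p.
Proof.
move=> nN; have le_sum j p : ((j + p <= n)%N%:R : R) = \sum_(0 <= s < n.+1) (s == j + p)%N%:R.
  under eq_bigr => s _ do rewrite -[_%:R]mulr1.
  by rewrite sum_seq_delta ?iota_uniq // mulr1 mem_index_iota.
under eq_bigr => j _ do under eq_bigr => p _ do rewrite le_sum mulr_suml.
under eq_bigr => j _ do rewrite exchange_big.
rewrite exchange_big; apply: eq_big_nat => s /andP[_ sn].
by rewrite sum_nat_antidiagonal // (leq_ltn_trans _ nN).
Qed.

Lemma delta_int_pair (t : nat) (n1 n2 : int) :
  (t%:Z == n1)%:R * (t%:Z == n2)%:R =
  ((n1 == n2) && (0 <= n1))%:R * (absz n1 == t)%:R :> R.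
Proof.
case: (t%:Z =P n1) => h1; case: (t%:Z =P n2) => h2; case: (n1 =P n2) => h3;
case: (absz n1 =P t) => h4; case: (boolP (0 <= n1)) => h5 /=;
rewrite ?mulr1 ?mulr0 ?mul0r ?mul1r //; exfalso; lia.
Qed.

Lemma sum_nat_triangle n (G : nat -> nat -> R) :
  \sum_(0 <= j < n.+1) \sum_(0 <= t < (n - j).+1) G j t =
  \sum_(0 <= t < n.+1) \sum_(0 <= j < (n - t).+1) G j t.
Proof.
have widen j (H : nat -> R) : (j <= n)%N -> \sum_(0 <= t < (n - j).+1) H t =
    \sum_(0 <= t < n.+1) (if (j + t <= n)%N then H t else 0).
  move=> le_jn; rewrite (big_nat_widen _ _ n.+1) ?ltnS ?leq_subr // big_mkcond.
  by apply: eq_big_nat => t _; rewrite ltnS leq_subRL.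
under eq_big_nat => j /andP[_ jn] do rewrite widen //.
rewrite exchange_big_nat; apply: eq_big_nat => t /andP[_ tn].
by rewrite widen //; apply: eq_big_nat => j _; rewrite addnC.
Qed.

End FiniteSums.

Section FallingFactorial.
Variable R : comRingType.
Implicit Types (x y z a b : R) (n p q s j : nat).

Definition ffactr x n : R := \prod_(i < n) (x - i%:R).

Lemma ffactr0 x : ffactr x 0 = 1. Proof. by rewrite /ffactr big_ord0. Qed.

Lemma ffactrS x n : ffactr x n.+1 = ffactr x n * (x - n%:R).
Proof. by rewrite /ffactr big_ord_recr. Qed.

Lemma ffactrSl x n : ffactr x n.+1 = x * ffactr (x - 1) n.
Proof.
rewrite /ffactr big_ord_recl subr0; congr (_ * _); apply: eq_bigr => i _.
by rewrite lift0 -addn1 natrD opprD addrAC addrA.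
Qed.

Lemma ffactrD x p q : ffactr x (p + q) = ffactr x p * ffactr (x - p%:R) q.
Proof.
elim: q => [|q IH]; first by rewrite addn0 ffactr0 mulr1.
by rewrite addnS !ffactrS IH natrD opprD addrA mulrA.
Qed.

Lemma sum_binS (g : nat -> nat -> R) s :
  \sum_(0 <= p < s.+2) 'C(s.+1, p)%:R * g p (s.+1 - p)%N =
  \sum_(0 <= p < s.+1) 'C(s, p)%:R * (g p (s.+1 - p)%N + g p.+1 (s - p)%N).
Proof.
rewrite big_nat_recl // bin0 mul1r subn0.
under eq_bigr => p _ do rewrite binS natrD mulrDl subSS.
rewrite big_split /= addrA.
under [RHS]eq_bigr => p _ do rewrite mulrDr.
rewrite big_split /=; congr (_ + _).
rewrite [RHS]big_nat_recl // bin0 mul1r subn0; congr (_ + _).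
rewrite big_nat_recr //= bin_small // mul0r addr0.
by apply: eq_big_nat => p _; rewrite subSS.
Qed.

Lemma ffactr_vandermonde a b s :
  \sum_(0 <= p < s.+1) 'C(s, p)%:R * (ffactr a p * ffactr b (s - p)) =
  ffactr (a + b) s.
Proof.
elim: s => [|s IH]; first by rewrite big_nat1 bin0 !ffactr0 mul1r mulr1.
rewrite (sum_binS (fun p q => ffactr a p * ffactr b q)) ffactrS -IH mulr_suml.
apply: eq_big_nat => p /andP[_ lp]; rewrite ltnS in lp.
rewrite subSn // !ffactrS natrB //; ring.
Qed.

Lemma ffactr_vandermondeN x z n :
  \sum_(0 <= j < n.+1) 'C(n, j)%:R *
     ((-1) ^+ j * ffactr z j * ffactr (x + z - j%:R) (n - j)) = ffactr x n.
Proof.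
elim: n x => [|n IH] x; first by rewrite big_nat1 bin0 !ffactr0 expr0 !mul1r.
rewrite (sum_binS (fun j q => (-1) ^+ j * ffactr z j * ffactr (x + z - j%:R) q)).
rewrite ffactrSl -(IH (x - 1)) mulr_sumr.
apply: eq_big_nat => j /andP[_ lj]; rewrite ltnS in lj.
rewrite subSn // ffactrSl ffactrS exprS.
have -> : x + z - j.+1%:R = x - 1 + z - j%:R by rewrite -addn1 natrD; ring.
have -> : x + z - j%:R - 1 = x - 1 + z - j%:R by ring.
ring.
Qed.

End FallingFactorial.

Section RuleCoefficient.
Variable F : numFieldType.
Implicit Types (x y z w a b u v : F) (n p s j t : nat).

Lemma natr_fact_neq0 n : (n`!%:R : F) != 0.
Proof. by rewrite pnatr_eq0 -lt0n fact_gt0. Qed.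

Lemma natr_bin p s : (p <= s)%N ->
  ('C(s, p)%:R : F) = s`!%:R / (p`!%:R * (s - p)`!%:R).
Proof.
move=> le_ps; rewrite -(bin_fact le_ps) !natrM mulfK //.
by rewrite mulf_neq0 // natr_fact_neq0.
Qed.

Lemma ffactr_vandermonde_fact a b s :
  \sum_(0 <= p < s.+1) ffactr a p / p`!%:R * (ffactr b (s - p) / (s - p)`!%:R)
  = ffactr (a + b) s / s`!%:R.
Proof.
rewrite -ffactr_vandermonde mulr_suml; apply: eq_big_nat => p /andP[_ lp].
rewrite ltnS in lp; rewrite natr_bin //.
by field; rewrite ?mulf_neq0 ?natr_fact_neq0.
Qed.

Lemma ffactr_vandermondeN_fact x z n :
  \sum_(0 <= j < n.+1) (-1) ^+ j * (ffactr z j / j`!%:R) *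
      (ffactr (x + z - j%:R) (n - j) / (n - j)`!%:R) = ffactr x n / n`!%:R.
Proof.
rewrite -(ffactr_vandermondeN x z) mulr_suml; apply: eq_big_nat => j /andP[_ lj].
rewrite ltnS in lj; rewrite natr_bin //.
by field; rewrite ?mulf_neq0 ?natr_fact_neq0.
Qed.

Definition rule_coefr u v j : F := ffactr u j * ffactr v j / j`!%:R.

Lemma rule_coefE (b c : int) j : rule_coef F b c j = rule_coefr b%:~R c%:~R j.
Proof. by []. Qed.

Lemma rule_coefr_antimul_l x y z w n :
  \sum_(0 <= j < n.+1)
     (-1) ^+ j * rule_coefr (y + w - j%:R) (x + z - j%:R) (n - j) * rule_coefr y z j =
  \sum_(0 <= t < n.+1)
     ffactr w t / t`!%:R * rule_coefr y x (n - t) * ffactr (x + z - (n - t)%:R) t.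
Proof.
transitivity (\sum_(0 <= j < n.+1) \sum_(0 <= t < (n - j).+1)
   (-1) ^+ j * (ffactr w t / t`!%:R) *
   (ffactr (y - j%:R) (n - j - t) / (n - j - t)`!%:R) *
   ffactr (x + z - j%:R) (n - j) * ffactr y j * ffactr z j / j`!%:R).
  apply: eq_big_nat => j /andP[_ jn]; rewrite ltnS in jn.
  have -> : y + w - j%:R = w + (y - j%:R) by ring.
  have -> : rule_coefr (w + (y - j%:R)) (x + z - j%:R) (n - j) =
      ffactr (w + (y - j%:R)) (n - j) / (n - j)`!%:R * ffactr (x + z - j%:R) (n - j).
    by rewrite /rule_coefr mulrAC.
  rewrite -ffactr_vandermonde_fact !mulr_suml mulr_sumr mulr_suml.
  apply: eq_big_nat => t _; rewrite /rule_coefr.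
  by field; rewrite ?mulf_neq0 ?natr_fact_neq0.
rewrite sum_nat_triangle; apply: eq_big_nat => t /andP[_ tn]; rewrite ltnS in tn.
transitivity (ffactr w t / t`!%:R * ffactr y (n - t) * ffactr (x + z - (n - t)%:R) t *
  (ffactr x (n - t) / (n - t)`!%:R)); last by rewrite /rule_coefr; ring.
rewrite -(ffactr_vandermondeN_fact x z) mulr_sumr; apply: eq_big_nat => j /andP[_ jn].
rewrite ltnS in jn.
have split_nj : (n - j = (n - t - j) + t)%N by lia.
have -> : (n - j - t = n - t - j)%N by lia.
rewrite split_nj ffactrD.
have -> : ffactr y (n - t) = ffactr y j * ffactr (y - j%:R) (n - t - j)
  by rewrite -ffactrD subnKC.
have -> : x + z - j%:R - (n - t - j)%:R = x + z - (n - t)%:R by rewrite natrB //; ring.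
by rewrite /rule_coefr; field; rewrite ?mulf_neq0 ?natr_fact_neq0.
Qed.

Lemma rule_coefr_antimul_r x y z w n :
  \sum_(0 <= s < n.+1) \sum_(0 <= p < s.+1)
     rule_coefr w z p * rule_coefr y x (n - s) *
     rule_coefr (w - p%:R) (x - (n - s)%:R) (s - p) =
  \sum_(0 <= s < n.+1)
     ffactr w s / s`!%:R * rule_coefr y x (n - s) * ffactr (x + z - (n - s)%:R) s.
Proof.
apply: eq_big_nat => s /andP[_ sn]; rewrite ltnS in sn.
have -> : x + z - (n - s)%:R = z + (x - (n - s)%:R) by ring.
transitivity (ffactr w s * rule_coefr y x (n - s) *
  (ffactr (z + (x - (n - s)%:R)) s / s`!%:R)); last by ring.
rewrite -ffactr_vandermonde_fact mulr_sumr; apply: eq_big_nat => p /andP[_ ps].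
rewrite ltnS in ps; rewrite /rule_coefr -[in ffactr w s](subnKC ps) ffactrD.
by field; rewrite ?mulf_neq0 ?natr_fact_neq0.
Qed.

Lemma rule_coefr_involution u v n :
  \sum_(0 <= j < n.+1) (-1) ^+ j * rule_coefr u v j * rule_coefr (u - j%:R) (v - j%:R) (n - j)
  = (n == 0)%:R.
Proof.
transitivity (ffactr u n * \sum_(0 <= j < n.+1) (-1) ^+ j * (ffactr v j / j`!%:R) *
      (ffactr (0 + v - j%:R) (n - j) / (n - j)`!%:R)).
  rewrite mulr_sumr; apply: eq_big_nat => j /andP[_ jn]; rewrite ltnS in jn.
  rewrite /rule_coefr add0r -[in ffactr u n](subnKC jn) ffactrD.
  by field; rewrite ?mulf_neq0 ?natr_fact_neq0.
rewrite ffactr_vandermondeN_fact; case: n => [|n]; first by rewrite !ffactr0 divr1 mulr1.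
by rewrite [ffactr 0 _]ffactrSl !mul0r mulr0.
Qed.

End RuleCoefficient.

Definition window (L : nat) : seq int := [seq i%:Z - L%:Z | i <- iota 0 (L + L).+1].

Lemma mem_window L a : (a \in window L) = (- L%:Z <= a <= L%:Z).
Proof.
apply/mapP/idP.
  by case=> i; rewrite mem_iota => /andP[_ ?] ->; apply/andP; split; lia.
by move=> ?; exists (absz (a + L%:Z)); rewrite ?mem_iota; [apply/andP; split|]; lia.
Qed.

Lemma window_uniq L : uniq (window L).
Proof. by rewrite map_inj_uniq ?iota_uniq // => i j /addIr; case. Qed.

Section Signs.
Variable F : numFieldType.

Lemma expN1zD (a b : int) : (-1 : F) ^ (a + b) = (-1) ^ a * (-1) ^ b.
Proof. by rewrite expfzDr // oppr_eq0 oner_eq0. Qed.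

Lemma expN1zDn (a : int) (n : nat) : (-1 : F) ^ (a + n%:Z) = (-1) ^ a * (-1) ^+ n.
Proof. exact: expN1zD. Qed.

Lemma expN1zBn (a : int) (n : nat) : (-1 : F) ^ (a - n%:Z) = (-1) ^ a * (-1) ^+ n.
Proof.
have := expN1zDn (a - n%:Z) n; rewrite subrK => ->.
by rewrite -mulrA -exprD addnn -mul2n exprM sqrrN !expr1n mulr1.
Qed.

Lemma expN1z_mul_self (a : int) : (-1 : F) ^ a * (-1) ^ a = 1.
Proof. by rewrite -expfzMl mulrNN mulr1 exp1rz. Qed.

End Signs.

Section Dagger.
Variable F : numFieldType.
Implicit Types (C D : series F) (K M k m : int).

Definition bounded_support C K M := forall k m, C k m != 0 -> (k <= K) && (m <= M).

Lemma bounded_supportP C K M k m :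
  bounded_support C K M -> C k m != 0 -> k <= K /\ m <= M.
Proof. by move=> hC /hC /andP. Qed.

Lemma bounded_support_eq0 C K M k m :
  bounded_support C K M -> (K < k) || (M < m) -> C k m = 0.
Proof.
move=> hC out; apply/eqP; apply: contraT => /(bounded_supportP hC) [].
by move: out => /orP[]; lia.
Qed.

Lemma dag_term_eq0 C K M k m j : bounded_support C K M ->
  (K < k + j%:Z) || (M < m + j%:Z) -> dag_term C k m j = 0.
Proof. by move=> hC out; rewrite /dag_term (bounded_support_eq0 hC) ?mulr0 ?mul0r. Qed.

Lemma dag_term_finite C K M k m :
  bounded_support C K M -> finite_set [set j : nat | dag_term C k m j != 0].
Proof.
move=> hC; apply: sub_finite_set (finite_II (absz (K - k)).+1) => j /=.
by apply: contraNT; rewrite -leqNgt => lt_j; rewrite (dag_term_eq0 hC) //; lia.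
Qed.

Lemma dag_sum C k m N :
  (forall j, (N <= j)%N -> dag_term C k m j = 0) ->
  dag C k m = \sum_(0 <= j < N) dag_term C k m j.
Proof.
move=> vanish; rewrite /dag (fsbigE (iota 0 N)) ?iota_uniq //.
  by rewrite /index_iota subn0; apply: eq_bigl => j; exact: in_setT.
by move=> j _; rewrite mem_iota add0n -leqNgt => /vanish.
Qed.

Lemma dag_sum_bounded C K M k m N :
  bounded_support C K M -> K - k < N%:Z ->
  dag C k m = \sum_(0 <= j < N) dag_term C k m j.
Proof.
by move=> hC ltN; apply: dag_sum => j le_Nj; apply: (dag_term_eq0 hC); lia.
Qed.

Lemma dag_bounded_support C K M : bounded_support C K M -> bounded_support (dag C) K M.
Proof.
move=> hC k m; apply: contraR => out; apply/eqP; rewrite /dag fsbig1 // => j _.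
by apply: (dag_term_eq0 hC); move: out; rewrite negb_and -!ltNge => /orP[]; lia.
Qed.

Lemma psi_mul_sum C D k m N L :
  (forall j a b, psi_mul_term C D k m (j, (a, b)) != 0 ->
     [&& (j < N)%N, a \in window L & b \in window L]) ->
  psi_mul C D k m = \sum_(0 <= j < N) \sum_(a <- window L) \sum_(b <- window L)
                       psi_mul_term C D k m (j, (a, b)).
Proof.
move=> supp; rewrite /psi_mul (fsbigE [seq (j, ab) | j <- iota 0 N,
    ab <- [seq (a, b) | a <- window L, b <- window L]]) //.
- rewrite (eq_bigl xpredT) => [|t]; last exact: in_setT.
  rewrite big_allpairs /index_iota subn0; apply: eq_bigr => j _.
  by rewrite big_allpairs.
- rewrite !allpairs_uniq ?iota_uniq ?window_uniq //.
  + by move=> [? ?] [? ?] _ _ [-> ->].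
  + by move=> [? ?] [? ?] _ _ [-> ->].
- move=> [j [a b]] _ notin; apply/eqP; move: notin; apply: contraNT.
  move=> /supp /and3P[jN aL bL]; apply: (allpairs_f pair); first by rewrite mem_iota.
  exact: (allpairs_f pair).
Qed.

Lemma psi_mul_term_support C D K1 M1 K2 M2 k m j a b :
  bounded_support C K1 M1 -> bounded_support D K2 M2 ->
  psi_mul_term C D k m (j, (a, b)) != 0 ->
  [/\ a <= K1, b <= M1, k + j%:Z - a <= K2 & m + j%:Z - b <= M2].
Proof.
rewrite /psi_mul_term /= !mulf_eq0 !negb_or => hC hD /andP[/andP[nzC nzD] _].
by have [? ?] := bounded_supportP hC nzC; have [? ?] := bounded_supportP hD nzD.
Qed.

Lemma psi_mul_bounded_support C D K1 M1 K2 M2 :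
  bounded_support C K1 M1 -> bounded_support D K2 M2 ->
  bounded_support (psi_mul C D) (K1 + K2) (M1 + M2).
Proof.
move=> hC hD k m; apply: contraR => out; apply/eqP; rewrite /psi_mul fsbig1 // => -[j [a b]] _.
apply/eqP; apply: contraNT out => /(psi_mul_term_support hC hD) [? ? ? ?].
by apply/andP; split; lia.
Qed.

Lemma dag_linear a C D K1 M1 K2 M2 :
  bounded_support C K1 M1 -> bounded_support D K2 M2 ->
  dag (psi_add C (psi_scale a D)) = psi_add (dag C) (psi_scale a (dag D)).
Proof.
move=> hC hD; apply/funext => k; apply/funext => m.
pose N := (absz (K1 - k) + absz (K2 - k)).+1.
rewrite /psi_add /psi_scale (dag_sum_bounded _ hC (N := N)) ?(dag_sum_bounded _ hD (N := N));
  try lia.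
rewrite (dag_sum (N := N)) => [|j le_Nj]; last first.
  rewrite /dag_term /psi_add /psi_scale (bounded_support_eq0 hC) ?(bounded_support_eq0 hD).
  - by rewrite mulr0 addr0 mulr0 mul0r.
  - by apply/orP; left; lia.
  - by apply/orP; left; lia.
rewrite mulr_sumr -big_split /=; apply: eq_bigr => j _.
by rewrite /dag_term /psi_add /psi_scale; ring.
Qed.

Lemma dag_psi_one : dag (psi_one F) = psi_one F.
Proof.
apply/funext => k; apply/funext => m.
have term j : dag_term (psi_one F) k m j = (j == 0)%:R * psi_one F k m.
  rewrite /dag_term /psi_one; case: j => [|j].
    rewrite !addr0 /rule_coef /ffact !big_ord0 divr1 !mulr1 mul1r.
    by case: ifP => [/andP[_ /eqP ->]|_]; rewrite ?expr0z ?mulr1 ?mulr0.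
  case: ifP => [/andP[_ /eqP ->]|_]; last by rewrite mulr0 mul0r mul0r.
  by rewrite /rule_coef [ffact _ 0 _]ffactrSl !mul0r mulr0.
rewrite (dag_sum (N := 1)) => [|j j_gt0]; first by rewrite big_nat1 term mul1r.
by rewrite term (_ : j == 0 = false) ?mul0r //; lia.
Qed.

Lemma dagK C K M : bounded_support C K M -> dag (dag C) = C.
Proof.
move=> hC; apply/funext => k; apply/funext => m.
pose N := (absz (K - k)).+1; have ltN : K - k < N%:Z by lia.
rewrite (dag_sum_bounded _ (dag_bounded_support hC) ltN).
transitivity (\sum_(0 <= i < N) \sum_(0 <= j < N)
   (-1) ^+ j * C (k + i%:Z + j%:Z) (m + i%:Z + j%:Z) *
   rule_coef F (m + i%:Z + j%:Z) (k + i%:Z + j%:Z) j * rule_coef F (m + i%:Z) (k + i%:Z) i).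
  apply: eq_bigr => i _; rewrite /dag_term (dag_sum_bounded _ hC (N := N)); last by lia.
  rewrite mulr_sumr mulr_suml; apply: eq_bigr => j _.
  by rewrite /dag_term (@expN1zDn F (m + i%:Z) j) !mulrA expN1z_mul_self mul1r.
rewrite sum_nat_square_antidiagonals => [|i j le_N]; last first.
  by rewrite (bounded_support_eq0 hC) ?mulr0 ?mul0r //; apply/orP; left; lia.
transitivity (\sum_(0 <= n < N) C (k + n%:Z) (m + n%:Z) * (n == 0)%:R).
  apply: eq_bigr => n _; rewrite -(rule_coefr_involution (m + n%:Z)%:~R (k + n%:Z)%:~R).
  rewrite mulr_sumr; apply: eq_big_nat => j /andP[_ jn]; rewrite ltnS in jn.
  have shift (a : int) : a + (n - j)%N%:Z + j%:Z = a + n%:Z by lia.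
  have shiftB (a : int) : a + (n - j)%N%:Z = a + n%:Z - j%:Z by lia.
  by rewrite !shift !shiftB !rule_coefE !intrB; ring.
by rewrite big_nat_recl // big1 => [|n _]; rewrite ?mulr0 // !addr0 mulr1.
Qed.

End Dagger.

Section Kernel.
Variable F : numFieldType.
Implicit Types (C D : series F) (X : int -> int -> int -> int -> F) (k m al be ga de : int).

Definition kernel_sum C D L X : F :=
  \sum_(al <- window L) \sum_(be <- window L) \sum_(ga <- window L) \sum_(de <- window L)
     C al be * D ga de * X al be ga de.

Lemma kernel_sum_sum (I : Type) (s : seq I) C D L (X : I -> int -> int -> int -> int -> F) :
  \sum_(x <- s) kernel_sum C D L (X x) =
  kernel_sum C D L (fun al be ga de => \sum_(x <- s) X x al be ga de).
Proof.
rewrite /kernel_sum exchange_big; apply: eq_bigr => al _.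
rewrite exchange_big; apply: eq_bigr => be _.
rewrite exchange_big; apply: eq_bigr => ga _.
by rewrite exchange_big; apply: eq_bigr => de _; rewrite mulr_sumr.
Qed.

Lemma eq_kernel_sum C D L X1 X2 :
  (forall al be ga de, al \in window L -> be \in window L -> ga \in window L ->
     de \in window L -> C al be != 0 -> D ga de != 0 ->
     X1 al be ga de = X2 al be ga de) ->
  kernel_sum C D L X1 = kernel_sum C D L X2.
Proof.
move=> eqX; apply: eq_big_seq => al alL; apply: eq_big_seq => be beL.
apply: eq_big_seq => ga gaL; apply: eq_big_seq => de deL.
have [->|nzC] := eqVneq (C al be) 0; first by rewrite !mul0r.
have [->|nzD] := eqVneq (D ga de) 0; first by rewrite mulr0 !mul0r.
by rewrite eqX.
Qed.

Lemma kernel_sum_point C D L e1 e2 e3 e4 (Y : F) :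
  (C e1 e2 * D e3 e4 != 0 ->
     [&& e1 \in window L, e2 \in window L, e3 \in window L & e4 \in window L]) ->
  C e1 e2 * D e3 e4 * Y =
  kernel_sum C D L (fun al be ga de =>
     (al == e1)%:R * (be == e2)%:R * ((ga == e3)%:R * (de == e4)%:R * Y)).
Proof.
move=> supp; transitivity (\sum_(al <- window L) (al == e1)%:R *
    \sum_(be <- window L) (be == e2)%:R * \sum_(ga <- window L) (ga == e3)%:R *
    \sum_(de <- window L) (de == e4)%:R * (C al be * D ga de * Y)).
  rewrite !sum_seq_delta ?window_uniq //.
  have [->|/supp /and4P[-> -> -> ->]] := eqVneq (C e1 e2 * D e3 e4) 0.
    by rewrite mul0r !mulr0.
  by rewrite !mul1r.
apply: eq_bigr => al _; rewrite mulr_sumr; apply: eq_bigr => be _.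
rewrite !mulr_sumr; apply: eq_bigr => ga _; rewrite !mulr_sumr; apply: eq_bigr => de _.
ring.
Qed.

(* [dag_mul_kernel k m N L al be ga de] is the (k, m) coefficient of
   (x^al d^be x^ga d^de)^dagger and [mul_dag_kernel] that of
   (x^ga d^de)^dagger (x^al d^be)^dagger, both with the defining sums truncated at [N]
   and written with Kronecker deltas, so that they arise termwise from the expansions of
   (C D)^dagger and D^dagger C^dagger. *)
Definition dag_mul_kernel (k m : int) (N L : nat) al be ga de : F :=
  \sum_(0 <= i < N) \sum_(0 <= j < N) \sum_(a <- window L) \sum_(b <- window L)
    (al == a)%:R * (be == b)%:R *
    ((ga == k + i%:Z + j%:Z - a)%:R * (de == m + i%:Z + j%:Z - b)%:R *
     ((-1) ^ (m + i%:Z) * rule_coef F b (k + i%:Z + j%:Z - a) j *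
      rule_coef F (m + i%:Z) (k + i%:Z) i)).

Lemma dag_mul_kernelE k m N L al be ga de :
  al \in window L -> be \in window L -> al + ga - k < N%:Z ->
  dag_mul_kernel k m N L al be ga de =
  ((al + ga - k == be + de - m) && (0 <= al + ga - k))%:R *
  \sum_(0 <= j < (absz (al + ga - k)%R).+1)
     ((-1) ^ (m + (absz (al + ga - k)%R - j)%N%:Z) * rule_coef F be ga j *
      rule_coef F (m + (absz (al + ga - k)%R - j)%N%:Z)
                  (k + (absz (al + ga - k)%R - j)%N%:Z) (absz (al + ga - k)%R - j)).
Proof.
move=> alL beL ltN; rewrite /dag_mul_kernel.
under eq_bigr => i _ do under eq_bigr => j _ do
  rewrite sum_seq_delta2 ?window_uniq // alL beL !mul1r.
set n1 := al + ga - k; set n2 := be + de - m.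
have E1 i j : (ga == k + i%:Z + j%:Z - al) = ((i + j)%N%:Z == n1) by apply/eqP/eqP; lia.
have E2 i j : (de == m + i%:Z + j%:Z - be) = ((i + j)%N%:Z == n2) by apply/eqP/eqP; lia.
under eq_bigr => i _ do under eq_bigr => j _ do rewrite E1 E2 delta_int_pair -!mulrA.
under eq_bigr => i _ do rewrite -mulr_sumr.
rewrite -mulr_sumr; have [n12|] := boolP (_ && _); last by rewrite !mul0r.
rewrite !mul1r sum_nat_antidiagonal; last by move: n12 ltN; rewrite /n1; lia.
apply: eq_big_nat => j /andP[_ jn]; rewrite ltnS in jn.
have -> : k + (absz n1 - j)%N%:Z + j%:Z - al = ga by move: n12 jn; rewrite /n1; lia.
by rewrite /rule_coef; ring.
Qed.

Definition mul_dag_kernel (k m : int) (N L : nat) al be ga de : F :=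
  \sum_(0 <= j < N) \sum_(a <- window L) \sum_(b <- window L)
  \sum_(0 <= p < N) \sum_(0 <= q < N)
    (al == k + j%:Z - a + q%:Z)%:R * (be == m + j%:Z - b + q%:Z)%:R *
    ((ga == a + p%:Z)%:R * (de == b + p%:Z)%:R *
     ((-1) ^ (b + p%:Z) * rule_coef F (b + p%:Z) (a + p%:Z) p *
      ((-1) ^ (m + j%:Z - b + q%:Z) *
       rule_coef F (m + j%:Z - b + q%:Z) (k + j%:Z - a + q%:Z) q) *
      rule_coef F b (k + j%:Z - a) j)).

Definition mul_dag_summand al be ga de (j p q : nat) : F :=
  (-1) ^ be * (-1) ^ de * rule_coef F de ga p * rule_coef F be al q *
  rule_coef F (de - p%:Z) (al - q%:Z) j.

Lemma mul_dag_kernelE k m N L al be ga de :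
  - L%:Z <= k - al -> - L%:Z <= m - be -> ga <= L%:Z -> de <= L%:Z ->
  al + ga - k < N%:Z ->
  mul_dag_kernel k m N L al be ga de =
  ((al + ga - k == be + de - m) && (0 <= al + ga - k))%:R *
  \sum_(0 <= s < (absz (al + ga - k)%R).+1) \sum_(0 <= p < s.+1)
     mul_dag_summand al be ga de (s - p) p (absz (al + ga - k)%R - s).
Proof.
move=> alL beL gaL deL ltN; rewrite /mul_dag_kernel.
have sub_eq x a (p : nat) : (x == a + p%:Z) = (x - p%:Z == a) by apply/eqP/eqP; lia.
under eq_bigr => j _ do rewrite exchange_big_pair.
under eq_bigr => j _ do under eq_bigr => p _ do under eq_bigr => q _ do
  under eq_bigr => a _ do under eq_bigr => b _ do rewrite mulrCA (sub_eq ga) (sub_eq de).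
under eq_bigr => j _ do under eq_bigr => p _ do under eq_bigr => q _ do
  rewrite sum_seq_delta2 ?window_uniq //.
set n1 := al + ga - k; set n2 := be + de - m.
have E1 j p q : (al == k + j%:Z - (ga - p%:Z) + q%:Z) = ((j + p + q)%N%:Z == n1).
  by apply/eqP/eqP; lia.
have E2 j p q : (be == m + j%:Z - (de - p%:Z) + q%:Z) = ((j + p + q)%N%:Z == n2).
  by apply/eqP/eqP; lia.
under eq_bigr => j _ do under eq_bigr => p _ do under eq_bigr => q _ do
  rewrite E1 E2 delta_int_pair.
set c := ((n1 == n2) && _)%:R.
transitivity (\sum_(0 <= j < N) \sum_(0 <= p < N) \sum_(0 <= q < N)
   c * ((absz n1 == j + p + q)%N%:R * mul_dag_summand al be ga de j p q)).
  apply: eq_bigr => j _; apply: eq_bigr => p _; apply: eq_bigr => q _.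
  rewrite /c; have [n12|] := boolP (_ && _); last by rewrite !mul0r mulr0.
  have [e|] := eqVneq (absz n1) (j + p + q)%N; last by rewrite !(mulr0, mul0r).
  have inL x : - L%:Z <= x <= L%:Z -> x \in window L by rewrite mem_window.
  rewrite !inL; try (apply/andP; split; move: n12 e; rewrite /n1 /n2; lia).
  have -> : k + j%:Z - (ga - p%:Z) = al - q%:Z by move: e n12; rewrite /n1; lia.
  have -> : m + j%:Z - (de - p%:Z) + q%:Z = be by move: e n12; rewrite /n1 /n2; lia.
  by rewrite !subrK /mul_dag_summand /= !mul1r; ring.
under eq_bigr => j _ do under eq_bigr => p _ do rewrite -mulr_sumr.
under eq_bigr => j _ do rewrite -mulr_sumr.
rewrite -mulr_sumr /c; have [n12|_] := boolP ((n1 == n2) && _); last by rewrite !mul0r.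
have nN : (absz n1 < N)%N by move: n12 ltN; rewrite /n1; lia.
rewrite !mul1r; under eq_bigr => j _ do under eq_bigr => p _ do rewrite sum_nat_delta_add //.
rewrite sum_nat_simplex //; apply: eq_big_nat => s /andP[_ sn].
by apply: eq_big_nat => p /andP[_ ps]; rewrite subnK.
Qed.

Lemma dag_mul_kernel_eq k m N L al be ga de :
  al \in window L -> be \in window L ->
  - L%:Z <= k - al -> - L%:Z <= m - be -> ga <= L%:Z -> de <= L%:Z ->
  al + ga - k < N%:Z ->
  dag_mul_kernel k m N L al be ga de = mul_dag_kernel k m N L al be ga de.
Proof.
move=> alL beL lo_al lo_be hi_ga hi_de ltN.
rewrite dag_mul_kernelE // mul_dag_kernelE //.
have [n12|_] := boolP (_ && _); last by rewrite !mul0r.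
rewrite !mul1r; set n := absz _.
pose x : F := al%:~R; pose y : F := be%:~R; pose z : F := ga%:~R; pose w : F := de%:~R.
transitivity ((-1) ^ (be + de) * \sum_(0 <= j < n.+1)
   (-1) ^+ j * rule_coefr (y + w - j%:R) (x + z - j%:R) (n - j) * rule_coefr y z j).
  rewrite mulr_sumr; apply: eq_big_nat => j /andP[_ jn]; rewrite ltnS in jn.
  have -> : m + (n - j)%N%:Z = be + de - j%:Z by move: n12 jn; rewrite /n; lia.
  have -> : k + (n - j)%N%:Z = al + ga - j%:Z by move: n12 jn; rewrite /n; lia.
  by rewrite expN1zBn !rule_coefE !intrB !intrD; ring.
rewrite rule_coefr_antimul_l -rule_coefr_antimul_r expN1zD mulr_sumr.
apply: eq_big_nat => s _; rewrite mulr_sumr; apply: eq_big_nat => p _.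
by rewrite /mul_dag_summand !rule_coefE !intrB; ring.
Qed.

End Kernel.

Section AntiMultiplicativity.
Variable F : numFieldType.
Variables (C D : series F) (K1 M1 K2 M2 k m : int) (L N : nat).
Hypotheses (hC : bounded_support C K1 M1) (hD : bounded_support D K2 M2).
Hypotheses (large_L : (absz K1 + absz M1 + absz K2 + absz M2 + absz k + absz m <= L)%N)
  (large_N : (3 * L < N)%N).

Lemma dag_psi_mul_kernel :
  dag (psi_mul C D) k m = kernel_sum C D L (dag_mul_kernel F k m N L).
Proof.
rewrite (dag_sum_bounded _ (psi_mul_bounded_support hC hD) (N := N)); last by lia.
transitivity (\sum_(0 <= i < N) \sum_(0 <= j < N) \sum_(a <- window L) \sum_(b <- window L)
  kernel_sum C D L (fun al be ga de => (al == a)%:R * (be == b)%:R *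
   ((ga == k + i%:Z + j%:Z - a)%:R * (de == m + i%:Z + j%:Z - b)%:R *
    ((-1) ^ (m + i%:Z) * rule_coef F b (k + i%:Z + j%:Z - a) j *
     rule_coef F (m + i%:Z) (k + i%:Z) i)))).
  apply: eq_bigr => i _.
  rewrite /dag_term (psi_mul_sum (N := N) (L := L)) => [|j a b]; last first.
    move=> /(psi_mul_term_support hC hD) [? ? ? ?]; rewrite !mem_window.
    by apply/and3P; split; [|apply/andP; split..]; lia.
  rewrite mulr_sumr mulr_suml; apply: eq_bigr => j _.
  rewrite mulr_sumr mulr_suml; apply: eq_big_seq => a aL.
  rewrite mulr_sumr mulr_suml; apply: eq_big_seq => b bL.
  rewrite -kernel_sum_point /psi_mul_term /=; first by ring.
  rewrite mulf_eq0 negb_or => /andP[/(bounded_supportP hC) [? ?] /(bounded_supportP hD) [? ?]].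
  move: aL bL; rewrite !mem_window => /andP[? ?] /andP[? ?].
  by apply/and4P; split; apply/andP; split; lia.
under eq_bigr => i _ do under eq_bigr => j _ do under eq_bigr => a _ do
  rewrite kernel_sum_sum.
under eq_bigr => i _ do under eq_bigr => j _ do rewrite kernel_sum_sum.
by under eq_bigr => i _ do rewrite kernel_sum_sum; rewrite kernel_sum_sum.
Qed.

Lemma psi_mul_dag_kernel :
  psi_mul (dag D) (dag C) k m = kernel_sum C D L (mul_dag_kernel F k m N L).
Proof.
have [hdC hdD] := (dag_bounded_support hC, dag_bounded_support hD).
rewrite (psi_mul_sum (N := N) (L := L)) => [|j a b]; last first.
  move=> /(psi_mul_term_support hdD hdC) [? ? ? ?]; rewrite !mem_window.
  by apply/and3P; split; [|apply/andP; split..]; lia.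
transitivity (\sum_(0 <= j < N) \sum_(a <- window L) \sum_(b <- window L)
  \sum_(0 <= p < N) \sum_(0 <= q < N)
  kernel_sum C D L (fun al be ga de =>
    (al == k + j%:Z - a + q%:Z)%:R * (be == m + j%:Z - b + q%:Z)%:R *
    ((ga == a + p%:Z)%:R * (de == b + p%:Z)%:R *
     ((-1) ^ (b + p%:Z) * rule_coef F (b + p%:Z) (a + p%:Z) p *
      ((-1) ^ (m + j%:Z - b + q%:Z) *
       rule_coef F (m + j%:Z - b + q%:Z) (k + j%:Z - a + q%:Z) q) *
      rule_coef F b (k + j%:Z - a) j)))); last first.
  under eq_bigr => j _ do under eq_bigr => a _ do under eq_bigr => b _ do
    under eq_bigr => p _ do rewrite kernel_sum_sum.
  under eq_bigr => j _ do under eq_bigr => a _ do under eq_bigr => b _ do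
    rewrite kernel_sum_sum.
  under eq_bigr => j _ do under eq_bigr => a _ do rewrite kernel_sum_sum.
  by under eq_bigr => j _ do rewrite kernel_sum_sum; rewrite kernel_sum_sum.
apply: eq_bigr => j _; apply: eq_big_seq => a aL; apply: eq_big_seq => b bL.
move: (aL) (bL); rewrite !mem_window => /andP[? ?] /andP[? ?].
rewrite /psi_mul_term /= (dag_sum_bounded _ hD (N := N)); last by lia.
rewrite (dag_sum_bounded _ hC (N := N)); last by lia.
rewrite mulr_suml mulr_suml; apply: eq_bigr => p _.
rewrite mulr_sumr mulr_suml; apply: eq_bigr => q _.
rewrite /dag_term -kernel_sum_point; first by ring.
rewrite mulf_eq0 negb_or => /andP[/(bounded_supportP hC) [? ?] /(bounded_supportP hD) [? ?]].
by apply/and4P; split; rewrite mem_window; apply/andP; split; lia.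
Qed.

Lemma dag_psi_mul_coef : dag (psi_mul C D) k m = psi_mul (dag D) (dag C) k m.
Proof.
rewrite dag_psi_mul_kernel psi_mul_dag_kernel; apply: eq_kernel_sum.
move=> al be ga de alL beL gaL deL /(bounded_supportP hC) [? ?] /(bounded_supportP hD) [? ?].
move: (gaL) (deL) (alL) (beL); rewrite !mem_window => /andP[? ?] /andP[? ?] /andP[? ?] /andP[? ?].
by apply: dag_mul_kernel_eq; lia.
Qed.

End AntiMultiplicativity.

Lemma dag_psi_mul (F : numFieldType) (C D : series F) K1 M1 K2 M2 :
  bounded_support C K1 M1 -> bounded_support D K2 M2 ->
  dag (psi_mul C D) = psi_mul (dag D) (dag C).
Proof.
move=> hC hD; apply/funext => k; apply/funext => m.
exact: (dag_psi_mul_coef (N := (3 * _).+1) hC hD (leqnn _)).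
Qed.

Theorem lemma2p3 (R : realType) :
  (* well-defined: the defining sums are finite and the result lies in PsiD *)
  (forall C : series R[i], isPsiD C ->
     (forall k m : int, finite_set [set j : nat | dag_term C k m j != 0])
     /\ isPsiD (dag C)) /\
  (* involutive *)
  (forall C : series R[i], isPsiD C -> dag (dag C) = C) /\
  (* C-linear *)
  (forall (a : R[i]) (C D : series R[i]), isPsiD C -> isPsiD D ->
     dag (psi_add C (psi_scale a D)) = psi_add (dag C) (psi_scale a (dag D))) /\
  (* unital *)
  dag (psi_one R[i]) = psi_one R[i] /\
  (* anti-multiplicative *)
  (forall C D : series R[i], isPsiD C -> isPsiD D ->
     dag (psi_mul C D) = psi_mul (dag D) (dag C)).
Proof.
split.
  move=> C [K [M hC]]; split; first by move=> k m; exact: dag_term_finite hC.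
  by exists K, M; exact: dag_bounded_support.
split; first by move=> C [K [M hC]]; exact: dagK hC.
split; first by move=> a C D [K1 [M1 hC]] [K2 [M2 hD]]; exact: dag_linear hC hD.
split; first exact: dag_psi_one.
by move=> C D [K1 [M1 hC]] [K2 [M2 hD]]; exact: dag_psi_mul hC hD.
Qed.
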